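(* Let $s\ge 1$, $r\ge 2$ and $n_0,\dots,n_s\ge 1$ be integers such that $\sum_{i=0}^s n_i^{-\frac{1}{r-1}}\ge s^{\frac{r}{r-1}}$. For $0\le i\le s$ let $$p_i=1-\frac{s\,n_i^{-\frac{1}{r-1}}}{\sum_{j=0}^s n_j^{-\frac{1}{r-1}}}.$$ Then $0\le p_i\le 1$ for each $0\le i\le s$, $\sum_{i=0}^s p_i=1$, and $\sum_{i=0}^s n_i(1-p_i)^r\le 1$. *)

From Stdlib Require Import Reals Lra.
Open Scope R_scope.

Definition aw (r : nat) (m : nat) : R := Rpower (INR m) (- (1 / (INR r - 1))).

(* S = sum_{j=0}^s n_j^{-1/(r-1)}  (sum_f_R0 f s = f 0 + ... + f s) *)
Definition Ssum (r s : nat) (n : nat -> nat) : R := sum_f_R0 (fun j => aw r (n j)) s.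

Definition pw (r s : nat) (n : nat -> nat) (i : nat) : R :=
  1 - INR s * aw r (n i) / Ssum r s n.

(* Put a_i = n_i^(-1/(r-1)) and S = sum_i a_i, so that 1 - p_i = s a_i / S.
   Since n_i a_i^(r-1) = 1, each term n_i (1 - p_i)^r equals a_i (s/S)^r, and
   the weighted sum collapses to S (s/S)^r = s^r / S^(r-1), which is at most 1
   exactly when S >= s^(r/(r-1)).  The same hypothesis gives S >= s, and with
   a_i <= 1 this yields 0 <= 1 - p_i <= 1. *)

From Stdlib Require Import Reals Lra Lia.
Open Scope R_scope.

Lemma Rpower_ge_base x y : 1 <= x -> 1 <= y -> x <= Rpower x y.
Proof.
  intros hx hy.
  rewrite <- (Rpower_1 x) at 1 by lra.
  now apply Rle_Rpower.
Qed.

Lemma Rpower_conj_exponent_pow x r :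
  0 < x -> (2 <= r)%nat -> Rpower x (INR r / (INR r - 1)) ^ (r - 1) = x ^ r.
Proof.
  intros hx hr.
  assert (Hr : 2 <= INR r) by (apply (le_INR 2); lia).
  rewrite <- Rpower_pow by apply exp_pos.
  rewrite Rpower_mult, minus_INR by lia.
  replace (INR r / (INR r - 1) * (INR r - INR 1)) with (INR r)
    by (simpl; field; lra).
  now apply Rpower_pow.
Qed.

Lemma aw_gt0 r m : 0 < aw r m.
Proof. apply exp_pos. Qed.

Lemma aw_le1 r m : (2 <= r)%nat -> (1 <= m)%nat -> aw r m <= 1.
Proof.
  intros hr hm.
  assert (Hm : 1 <= INR m) by (apply (le_INR 1); lia).
  assert (Hr : 2 <= INR r) by (apply (le_INR 2); lia).
  assert (0 < 1 / (INR r - 1)) by (apply Rdiv_lt_0_compat; lra).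
  rewrite <- (Rpower_O (INR m)) by lra.
  apply Rle_Rpower; lra.
Qed.

Lemma INR_mul_aw_pow r m :
  (2 <= r)%nat -> (1 <= m)%nat -> INR m * aw r m ^ r = aw r m.
Proof.
  intros hr hm.
  assert (Hm : 1 <= INR m) by (apply (le_INR 1); lia).
  assert (Hr : 2 <= INR r) by (apply (le_INR 2); lia).
  unfold aw.
  rewrite <- Rpower_pow, Rpower_mult by apply exp_pos.
  rewrite <- (Rpower_1 (INR m)) at 1 by lra.
  rewrite <- Rpower_plus.
  f_equal; field; lra.
Qed.

Lemma one_sub_pw r s n i :
  1 - pw r s n i = aw r (n i) * (INR s / Ssum r s n).
Proof. unfold pw, Rdiv; ring. Qed.

Lemma sum_pw r s n : Ssum r s n <> 0 -> sum_f_R0 (pw r s n) s = 1.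
Proof.
  intros hS.
  rewrite (sum_eq _ (fun i => 1 - aw r (n i) * (INR s / Ssum r s n)))
    by (intros i _; rewrite <- one_sub_pw; ring).
  rewrite minus_sum, sum_cte, <- scal_sum, S_INR.
  unfold Ssum in *.
  field; exact hS.
Qed.

Lemma pw_bounds r s n i :
  (2 <= r)%nat -> (1 <= n i)%nat -> 0 < INR s <= Ssum r s n ->
  0 <= pw r s n i <= 1.
Proof.
  intros hr hn [hs hS].
  pose proof (aw_gt0 r (n i)); pose proof (aw_le1 r (n i) hr hn).
  assert (Hq : 0 <= aw r (n i) * (INR s / Ssum r s n) <= 1).
  { split.
    - apply Rmult_le_pos; [|apply Rlt_le, Rdiv_lt_0_compat]; lra.
    - unfold Rdiv; rewrite <- Rmult_assoc.
      apply Rmult_le_reg_r with (Ssum r s n); [lra|].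
      rewrite Rmult_assoc, Rinv_l, Rmult_1_r, Rmult_1_l by lra.
      nra. }
  rewrite <- one_sub_pw in Hq; lra.
Qed.

Lemma sum_INR_mul_one_sub_pw_pow r s n :
  (2 <= r)%nat -> (forall i, (i <= s)%nat -> (1 <= n i)%nat) ->
  Ssum r s n <> 0 ->
  sum_f_R0 (fun i => INR (n i) * (1 - pw r s n i) ^ r) s
  = INR s ^ r / Ssum r s n ^ (r - 1).
Proof.
  intros hr hn hS.
  rewrite (sum_eq _ (fun i => aw r (n i) * (INR s / Ssum r s n) ^ r)).
  2:{ intros i hi.
      rewrite one_sub_pw, Rpow_mult_distr, <- Rmult_assoc.
      now rewrite INR_mul_aw_pow by auto. }
  rewrite <- scal_sum; fold (Ssum r s n).
  destruct r as [|k]; [lia|].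
  rewrite Nat.sub_1_r; simpl pred.
  unfold Rdiv; rewrite Rpow_mult_distr, pow_inv; simpl pow.
  field; split; [apply pow_nonzero|]; exact hS.
Qed.

Theorem lemma5p2 (s r : nat) (n : nat -> nat)
  (hs : (1 <= s)%nat) (hr : (2 <= r)%nat)
  (hn : forall i, (i <= s)%nat -> (1 <= n i)%nat)
  (hsum : Rpower (INR s) (INR r / (INR r - 1)) <= Ssum r s n) :
  (forall i, (i <= s)%nat -> 0 <= pw r s n i <= 1) /\
  sum_f_R0 (fun i => pw r s n i) s = 1 /\
  sum_f_R0 (fun i => INR (n i) * (1 - pw r s n i) ^ r) s <= 1.
Proof.
  assert (Hs : 1 <= INR s) by (apply (le_INR 1); lia).
  assert (Hr : 2 <= INR r) by (apply (le_INR 2); lia).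
  assert (HsS : INR s <= Ssum r s n).
  { apply Rle_trans with (2 := hsum), Rpower_ge_base; [lra|].
    apply Rmult_le_reg_r with (INR r - 1); [lra|].
    unfold Rdiv; rewrite Rmult_assoc, Rinv_l; lra. }
  assert (HS : 0 < Ssum r s n) by lra.
  assert (Hpow : INR s ^ r <= Ssum r s n ^ (r - 1)).
  { rewrite <- (Rpower_conj_exponent_pow (INR s) r) by (auto; lra).
    apply pow_incr; split; [apply Rlt_le, exp_pos | exact hsum]. }
  split; [|split].
  - intros i hi; apply pw_bounds; auto; lra.
  - apply sum_pw; lra.
  - rewrite sum_INR_mul_one_sub_pw_pow by (auto; lra).
    apply Rmult_le_reg_r with (Ssum r s n ^ (r - 1)); [apply pow_lt; lra|].
    unfold Rdiv; rewrite Rmult_assoc, Rinv_l, Rmult_1_r, Rmult_1_l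
      by (apply pow_nonzero; lra).
    exact Hpow.
Qed.
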